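(* Let $\mathfrak C$ be a monster model of a complete theory $T$. Let $p(\bar x)\in S(\emptyset)$ with $\bar x$ short, $q\in S_p(\mathfrak C)$, $M\prec\mathfrak C$ a small model, and $\bar\alpha$ a tuple in $\mathfrak C$ realizing $q|_M$. Let $B:=A_{q|_{\bar\alpha},\bar\alpha}=\{\sigma\in\mathrm{Aut}(\mathfrak C):\sigma(\bar\alpha)\models q|_{\bar\alpha}\}$. Then $B\,B\,B^{-1}B^{-1}\bar\alpha:=\{\sigma(\bar\alpha):\sigma\in BBB^{-1}B^{-1}\}\subseteq\{\bar\beta\subseteq\mathfrak C:d_L(\bar\alpha,\bar\beta)\le 4\}\subseteq[\bar\alpha]_{E_L}$.
   Context: $\mathfrak C$ is $\kappa$-saturated and strongly $\kappa$-homogeneous ($\kappa$ large); small/short means of size $<\kappa$. $S_p(\mathfrak C)=\{q\in S_{\bar x}(\mathfrak C):p\subseteq q\}$; $q|_M$ and $q|_{\bar\alpha}$ denote the restrictions of $q$ to types over $M$ and over (the set enumerated by) $\bar\alpha$. The Lascar distance $d_L(\bar\alpha,\bar\beta)$ is the least $n$ such that there are $\bar\alpha_0=\bar\alpha,\dots,\bar\alpha_n=\bar\beta$ and small models $M_0,\dots,M_{n-1}$ with $\bar\alpha_i\equiv_{M_i}\bar\alpha_{i+1}$; $E_L$ is the Lascar strong type relation, i.e. the orbit equivalence relation of the group generated by automorphisms fixing pointwise some small submodel, and $[\bar\alpha]_{E_L}$ is the class of $\bar\alpha$. *)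

From Stdlib Require Import List Fin.
Set Implicit Arguments.
Unset Strict Implicit.

Record language := {
  Fun : Type; fun_ar : Fun -> nat;
  Rel : Type; rel_ar : Rel -> nat }.

Record structure (L : language) := {
  carrier :> Type;
  ifun : forall f : Fun L, (Fin.t (fun_ar f) -> carrier) -> carrier;
  irel : forall r : Rel L, (Fin.t (rel_ar r) -> carrier) -> Prop }.
Arguments ifun {L} s f _.
Arguments irel {L} s r _.

Inductive term (L : language) : Type :=
  | tvar : nat -> term L
  | tapp : forall f : Fun L, (Fin.t (fun_ar f) -> term L) -> term L.

Inductive formula (L : language) : Type :=
  | feq : term L -> term L -> formula L
  | frel : forall r : Rel L, (Fin.t (rel_ar r) -> term L) -> formula L
  | fneg : formula L -> formula L
  | fand : formula L -> formula L -> formula L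
  | fex : nat -> formula L -> formula L.

Fixpoint fv_term L (t : term L) (n : nat) : Prop :=
  match t with
  | tvar _ k => k = n
  | @tapp _ f ts => exists i, fv_term (ts i) n
  end.

Fixpoint fv L (phi : formula L) (n : nat) : Prop :=
  match phi with
  | @feq _ t u => fv_term t n \/ fv_term u n
  | @frel _ r ts => exists i, fv_term (ts i) n
  | @fneg _ p => fv p n
  | @fand _ p q => fv p n \/ fv q n
  | @fex _ k p => k <> n /\ fv p n
  end.

Fixpoint eval L (M : structure L) (v : nat -> M) (t : term L) : M :=
  match t with
  | tvar _ k => v k
  | @tapp _ f ts => ifun M f (fun i => eval v (ts i))
  end.

Definition upd {X : Type} (v : nat -> X) (n : nat) (x : X) : nat -> X :=
  fun k => if Nat.eqb k n then x else v k.

Fixpoint sat L (M : structure L) (v : nat -> M) (phi : formula L) : Prop :=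
  match phi with
  | @feq _ t u => eval v t = eval v u
  | @frel _ r ts => irel M r (fun i => eval v (ts i))
  | @fneg _ p => ~ sat v p
  | @fand _ p q => sat v p /\ sat v q
  | @fex _ k p => exists m : M, sat (upd v k m) p
  end.

(* ---------- smallness: |X| < kappa, kappa represented by a type K ---------- *)
Definition small (K X : Type) : Prop :=
  ~ (exists f : K -> X, forall a b, f a = f b -> a = b).

Definition subset_small (K : Type) {X : Type} (A : X -> Prop) : Prop :=
  small K {x : X | A x}.

(* ---------- formulas with parameters, in variables indexed by I ----------
   A formula phi(xbar, cbar) is a pair (phi, s) where s says, for each
   variable number n, whether it stands for the coordinate x_i (inl i)
   or for the parameter c (inr c). *)
Definition pformula L (I : Type) (C : structure L) : Type :=
  (formula L * (nat -> I + carrier C))%type.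

Definition valuation L I (C : structure L) (b : I -> C) (s : nat -> I + carrier C)
  : nat -> C :=
  fun n => match s n with inl i => b i | inr c => c end.

Definition psat L I (C : structure L) (b : I -> C) (x : pformula I C) : Prop :=
  sat (valuation b (snd x)) (fst x).

Definition over L I (C : structure L) (A : C -> Prop) (x : pformula I C) : Prop :=
  forall n c, fv (fst x) n -> snd x n = inr c -> A c.

Definition realizes L I (C : structure L) (b : I -> C) (Sigma : pformula I C -> Prop) :=
  forall x, Sigma x -> psat b x.

Definition fin_sat L I (C : structure L) (Sigma : pformula I C -> Prop) : Prop :=
  forall l : list (pformula I C), (forall x, In x l -> Sigma x) ->
  exists b : I -> C, forall x, In x l -> psat b x.

Definition complete_type L I (C : structure L) (A : C -> Prop)
    (q : pformula I C -> Prop) : Prop :=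
  (forall x, q x -> over A x) /\ fin_sat q /\
  (forall phi s, over A (phi, s) -> q (phi, s) \/ q (fneg phi, s)).

Definition restrict L I (C : structure L) (q : pformula I C -> Prop) (A : C -> Prop)
  : pformula I C -> Prop := fun x => q x /\ over A x.

Definition range {I X : Type} (a : I -> X) : X -> Prop := fun c => exists i, a i = c.

Definition equiv_over L I (C : structure L) (A : C -> Prop) (a b : I -> C) : Prop :=
  forall x : pformula I C, over A x -> (psat a x <-> psat b x).

Definition fclosed L (C : structure L) (D : C -> Prop) : Prop :=
  forall f (args : Fin.t (fun_ar f) -> C), (forall i, D (args i)) -> D (ifun C f args).

Definition substr L (C : structure L) (D : C -> Prop) (H : fclosed D) : structure L :=
  {| carrier := {x : C | D x};
     ifun := fun f args =>
       exist _ (ifun C f (fun i => proj1_sig (args i)))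
               (H f _ (fun i => proj2_sig (args i)));
     irel := fun r args => irel C r (fun i => proj1_sig (args i)) |}.

Definition elem_sub L (C : structure L) (D : C -> Prop) : Prop :=
  (exists x, D x) /\
  exists H : fclosed D,
    forall (phi : formula L) (v : nat -> substr H),
      sat v phi <-> sat (fun n => proj1_sig (v n)) phi.

Definition small_model L (K : Type) (C : structure L) (D : C -> Prop) : Prop :=
  subset_small K D /\ elem_sub D.

Definition automorphism L (C : structure L) (g : C -> C) : Prop :=
  (forall a b, g a = g b -> a = b) /\ (forall b, exists a, g a = b) /\
  (forall f args, g (ifun C f args) = ifun C f (fun i => g (args i))) /\
  (forall r args, irel C r args <-> irel C r (fun i => g (args i))).
Arguments automorphism {L} C g.

Definition kappa_saturated L (K : Type) (C : structure L) : Prop :=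
  forall (A : C -> Prop), subset_small K A ->
  forall Sigma : pformula unit C -> Prop,
    (forall x, Sigma x -> over A x) -> fin_sat Sigma ->
    exists b : unit -> C, realizes b Sigma.

Definition strongly_homogeneous L (K : Type) (C : structure L) : Prop :=
  forall (J : Type), small K J -> forall a b : J -> C,
    equiv_over (fun _ => False) a b ->
    exists g, automorphism C g /\ forall j, g (a j) = b j.

(* kappa "large": kappa infinite and bigger than the language *)
Definition kappa_large L (K : Type) : Prop :=
  (exists e : nat -> K, forall m n, e m = e n -> m = n) /\
  small K (Fun L) /\ small K (Rel L).

Definition lascar_chain L (K I : Type) (C : structure L) (m : nat) (alpha beta : I -> C)
  : Prop :=
  exists (a : nat -> I -> C) (Ms : nat -> C -> Prop),
    a 0 = alpha /\ a m = beta /\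
    forall k, k < m -> small_model K (Ms k) /\ equiv_over (Ms k) (a k) (a (S k)).

Definition dL_le L (K I : Type) (C : structure L) (alpha beta : I -> C) (n : nat) : Prop :=
  exists m, m <= n /\ lascar_chain K m alpha beta.

Definition fixes_small_model L (K : Type) (C : structure L) (g : C -> C) : Prop :=
  automorphism C g /\ exists M, small_model K M /\ forall c, M c -> g c = c.

(* Autf_L(C): the group generated by those (closed under inverses, so finite
   compositions suffice, but we close under inverses explicitly anyway) *)
Inductive autfL L (K : Type) (C : structure L) : (C -> C) -> Prop :=
  | autfL_id : autfL K (fun x => x)
  | autfL_gen : forall g, fixes_small_model K g -> autfL K g
  | autfL_comp : forall g h, autfL K g -> autfL K h -> autfL K (fun x => g (h x))
  | autfL_inv : forall g h, autfL K g -> (forall x, h (g x) = x) ->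
                (forall x, g (h x) = x) -> autfL K h.

Definition EL L (K I : Type) (C : structure L) (alpha beta : I -> C) : Prop :=
  exists g, autfL K g /\ forall i, g (alpha i) = beta i.

Definition Aset L I (C : structure L) (q : pformula I C -> Prop) (alpha : I -> C)
  : (C -> C) -> Prop :=
  fun g => automorphism C g /\ realizes (fun i => g (alpha i)) (restrict q (range alpha)).

(* Choose [beta] realizing [q] over [M] together with [alpha]; realizing types in small
   tuples of variables reduces to one-variable saturation by a Zorn argument on partial
   realizations. For [t] in [B], [t alpha] and [beta] both realize [q] over [alpha], so by
   homogeneity some automorphism [f] fixing [alpha] maps [beta] to [t alpha]. As [alpha]
   and [beta] have the same type over [M], [alpha] and [t alpha] have the same type over
   the small model [f M]: every element of [B] and of [B^-1] moves [alpha] by Lascar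
   distance at most 1. Automorphisms preserve Lascar distance, so the four factors add
   up to distance 4. Conversely each step of a Lascar chain is realized, by homogeneity,
   by an automorphism fixing a small model. The unions of small sets used on the way are
   small because |X + X| = |X| for infinite X. *)

From Stdlib Require Import List Arith Lia Classical ClassicalEpsilon FunctionalExtensionality PropExtensionality.
From Stdlib Require FinFun.
From mathcomp Require classical_sets.
(* Requiring MathComp turns on [Asymmetric Patterns] globally. *)
Unset Asymmetric Patterns.
Set Implicit Arguments.
Unset Strict Implicit.

Definition is_chain T (F : (T -> Prop) -> Prop) : Prop :=
  forall X Y, F X -> F Y -> (forall t, X t -> Y t) \/ (forall t, Y t -> X t).

Definition chain_union T (F : (T -> Prop) -> Prop) : T -> Prop :=
  fun t => exists X, F X /\ X t.

Lemma zorn_sets (T : Type) (P : (T -> Prop) -> Prop) :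
  (forall F, (forall X, F X -> P X) -> is_chain F -> P (chain_union F)) ->
  exists A, P A /\ forall B, (forall t, A t -> B t) -> P B -> forall t, B t -> A t.
Proof.
  intros H.
  destruct (@classical_sets.Zorn_bigcup T P) as [A [PA HA]].
  - intros F FP Ftot.
    replace (classical_sets.bigcup F (fun X => X)) with (chain_union F); [now apply H|].
    apply functional_extensionality; intro t; apply propositional_extensionality.
    split; [intros [X [H1 H2]]; exists X; auto | intros [X H1 H2]; exists X; auto].
  - exists A; split; auto.
    intros B AB PB t Bt. apply NNPP; intro nA.
    apply (HA B); auto. split; [exact AB|]. intro BA. exact (nA (BA t Bt)).
Qed.

Lemma chain_union_list T (F : (T -> Prop) -> Prop) (HF : is_chain F) (ps : list T) :
  (forall p, In p ps -> chain_union F p) ->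
  ps = nil \/ exists X, F X /\ forall p, In p ps -> X p.
Proof.
  induction ps as [|a ps IH]; intro H; [now left|right].
  destruct (H a (or_introl eq_refl)) as [X [FX Xa]].
  destruct (IH (fun p h => H p (or_intror h))) as [->|[Y [FY HY]]].
  - exists X; split; auto. intros p [<-|[]]; auto.
  - destruct (HF X Y FX FY) as [XY|YX].
    + exists Y; split; auto. intros p [<-|E]; auto.
    + exists X; split; auto. intros p [<-|E]; auto.
Qed.

(** * Cardinal arithmetic below kappa *)

Definition card_le (X Y : Type) : Prop := exists f : X -> Y, forall a b, f a = f b -> a = b.

Lemma card_le_refl X : card_le X X.
Proof. exists (fun x => x); auto. Qed.

Lemma card_le_trans X Y Z : card_le X Y -> card_le Y Z -> card_le X Z.
Proof. intros [f Hf] [g Hg]; exists (fun x => g (f x)); auto. Qed.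

Lemma small_card_le K X Y : card_le X Y -> small K Y -> small K X.
Proof. intros H HY HX. exact (HY (card_le_trans HX H)). Qed.

Lemma card_le_sum A A' B B' : card_le A A' -> card_le B B' -> card_le (A + B) (A' + B').
Proof.
  intros [f Hf] [g Hg].
  exists (fun x => match x with inl a => inl (f a) | inr b => inr (g b) end).
  intros [a|b] [a'|b'] E; try discriminate; injection E; intro E'; f_equal; auto.
Qed.

Lemma card_le_sum_comm A B : card_le (A + B) (B + A).
Proof.
  exists (fun z => match z with inl a => inr a | inr b => inl b end).
  intros [a|a] [b|b] E; try discriminate; injection E; intros ->; auto.
Qed.

Lemma card_le_sig T (P : T -> Prop) : card_le {x | P x} T.
Proof. exists (@proj1_sig _ _). intros a b. apply eq_sig_hprop. intros; apply proof_irrelevance. Qed.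

Lemma card_le_sig_sum T (P : T -> Prop) : card_le T ({x | P x} + {x | ~ P x}).
Proof.
  exists (fun x => match excluded_middle_informative (P x) with
                  | left h => inl (exist _ x h) | right h => inr (exist _ x h) end).
  intros a b. destruct (excluded_middle_informative (P a)), (excluded_middle_informative (P b));
    intro E; try discriminate; injection E; auto.
Qed.

Definition partial_bijection A B (G : A * B -> Prop) : Prop :=
  (forall a b b', G (a, b) -> G (a, b') -> b = b') /\
  (forall a a' b, G (a, b) -> G (a', b) -> a = a').

Lemma partial_bijection_chain_union A B (F : (A * B -> Prop) -> Prop) :
  is_chain F -> (forall G, F G -> partial_bijection G) -> partial_bijection (chain_union F).
Proof.
  intros HF HG. split.
  - intros a b b' [X [FX HX]] [Y [FY HY]].
    destruct (HF X Y FX FY) as [XY|YX];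
      [apply (proj1 (HG Y FY) a) | apply (proj1 (HG X FX) a)]; auto.
  - intros a a' b [X [FX HX]] [Y [FY HY]].
    destruct (HF X Y FX FY) as [XY|YX];
      [apply (proj2 (HG Y FY) _ _ b) | apply (proj2 (HG X FX) _ _ b)]; auto.
Qed.

Lemma card_le_total (A B : Type) : card_le A B \/ card_le B A.
Proof.
  destruct (@zorn_sets (A * B) (@partial_bijection A B)) as [G [[G1 G2] Gmax]].
  { intros F FP HF. now apply partial_bijection_chain_union. }
  destruct (classic (forall a, exists b, G (a, b))) as [HA|HA].
  - left. exists (fun a => proj1_sig (constructive_indefinite_description _ (HA a))).
    intros a a'.
    destruct (constructive_indefinite_description _ (HA a)) as [b Hb].
    destruct (constructive_indefinite_description _ (HA a')) as [b' Hb'].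
    simpl; intros <-. eapply G2; eauto.
  - destruct (classic (forall b, exists a, G (a, b))) as [HB|HB].
    + right. exists (fun b => proj1_sig (constructive_indefinite_description _ (HB b))).
      intros b b'.
      destruct (constructive_indefinite_description _ (HB b)) as [a Ha].
      destruct (constructive_indefinite_description _ (HB b')) as [a' Ha'].
      simpl; intros <-. eapply G1; eauto.
    + exfalso. apply not_all_ex_not in HA as [a0 Ha0].
      apply not_all_ex_not in HB as [b0 Hb0].
      apply Ha0; exists b0.
      apply (Gmax (fun p => G p \/ p = (a0, b0))); auto.
      split.
      * intros a b b' [H1|H1] [H2|H2]; try congruence.
        -- eapply G1; eauto.
        -- injection H2 as -> ->. exfalso; eauto.
        -- injection H1 as -> ->. exfalso; eauto.
      * intros a a' b [H1|H1] [H2|H2]; try congruence.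
        -- eapply G2; eauto.
        -- injection H2 as -> ->. exfalso; eauto.
        -- injection H1 as -> ->. exfalso; eauto.
Qed.

Definition listable (T : Type) : Prop := exists l : list T, forall y, In y l.

Lemma listable_card_le_nat T : listable T -> card_le T nat.
Proof.
  intros [l Hl].
  exists (fun y => proj1_sig (constructive_indefinite_description _ (In_nth_error l y (Hl y)))).
  intros a b.
  destruct (constructive_indefinite_description _ _) as [n Hn].
  destruct (constructive_indefinite_description _ _) as [m Hm]. simpl; intros ->.
  rewrite Hn in Hm; now injection Hm.
Qed.

Lemma listable_not_card_le_nat T : listable T -> ~ card_le nat T.
Proof.
  intros [l Hl] [f Hf].
  assert (Hnd : NoDup (map f (seq 0 (S (length l))))).
  { apply FinFun.Injective_map_NoDup; [exact Hf|apply seq_NoDup]. }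
  apply NoDup_incl_length with (l' := l) in Hnd; [|intros y _; apply Hl].
  rewrite length_map, length_seq in Hnd. lia.
Qed.

Lemma listable_sum A B : listable A -> listable B -> listable (A + B).
Proof.
  intros [la Ha] [lb Hb]. exists (map inl la ++ map inr lb).
  intros [a|b]; apply in_or_app; [left|right]; apply in_map; auto.
Qed.

Lemma not_listable_card_le_nat T : ~ listable T -> card_le nat T.
Proof.
  intros Hl.
  assert (Hfresh : forall l : list T, exists y, ~ In y l).
  { intro l. apply NNPP; intro N. apply Hl. exists l. intro y. apply NNPP; intro N2. eauto. }
  set (fresh := fun l => proj1_sig (constructive_indefinite_description _ (Hfresh l))).
  assert (Hfresh' : forall l, ~ In (fresh l) l).
  { intro l; unfold fresh; destruct (constructive_indefinite_description _ _); auto. }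
  set (g := fix g (n : nat) : list T := match n with 0 => nil | S n => fresh (g n) :: g n end).
  assert (Hg : forall k n, k < n -> In (fresh (g k)) (g n)).
  { intros k n; induction n; intro Hk; [lia|].
    simpl. destruct (Nat.eq_dec k n) as [->|]; [now left|right; apply IHn; lia]. }
  exists (fun n => fresh (g n)).
  intros a b E. destruct (Nat.lt_trichotomy a b) as [h|[h|h]]; auto; exfalso.
  - apply (Hfresh' (g b)). rewrite <- E. auto.
  - apply (Hfresh' (g a)). rewrite E. auto.
Qed.

Lemma card_le_nat_sum_diag B : card_le nat (B + B) -> card_le nat B.
Proof.
  intro H. apply NNPP; intro nB.
  apply (@listable_not_card_le_nat (B + B)); auto.
  assert (lB : listable B) by (apply NNPP; intro; auto using not_listable_card_le_nat).
  now apply listable_sum.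
Qed.

Section Doubling.
Variable D : Type.

Definition doubling_dom (G : (D * bool) * D -> Prop) (d : D) : Prop := exists b y, G ((d, b), y).

Definition partial_doubling (G : (D * bool) * D -> Prop) : Prop :=
  (forall x y y', G (x, y) -> G (x, y') -> y = y') /\
  (forall x x' y, G (x, y) -> G (x', y) -> x = x') /\
  (forall d, doubling_dom G d -> forall b, exists y, G ((d, b), y)) /\
  (forall x y, G (x, y) -> doubling_dom G y).

Definition seq_doubling (E : nat -> D) (p : (D * bool) * D) : Prop :=
  exists n (b : bool), p = ((E n, b), E (2 * n + if b then 1 else 0)).

Lemma seq_doubling_code_inj (n n' : nat) (b b' : bool) :
  2 * n + (if b then 1 else 0) = 2 * n' + (if b' then 1 else 0) -> n = n' /\ b = b'.
Proof. destruct b, b'; lia. Qed.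

Lemma seq_doubling_dom E n : doubling_dom (seq_doubling E) (E n).
Proof. exists false, (E (2 * n + 0)), n, false. reflexivity. Qed.

Lemma partial_doubling_add_seq G E :
  partial_doubling G -> (forall m n, E m = E n -> m = n) ->
  (forall n, ~ doubling_dom G (E n)) ->
  partial_doubling (fun p => G p \/ seq_doubling E p).
Proof.
  intros [G1 [G2 [G3 G4]]] HE Hout. split; [|split; [|split]].
  - intros x y y' [H1|[n [b E1]]] [H2|[n' [b' E2]]].
    + eapply G1; eauto.
    + injection E2; intros -> ->. exfalso; apply (Hout n'). exists b', y; auto.
    + injection E1; intros -> ->. exfalso; apply (Hout n). exists b, y'; auto.
    + injection E1 as -> ->. injection E2 as En -> ->. apply HE in En as ->. reflexivity.
  - intros x x' y [H1|[n [b E1]]] [H2|[n' [b' E2]]].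
    + eapply G2; eauto.
    + injection E2; intros -> ->. exfalso; exact (Hout _ (G4 _ _ H1)).
    + injection E1; intros -> ->. exfalso; exact (Hout _ (G4 _ _ H2)).
    + injection E1 as -> ->. injection E2 as -> En.
      apply HE, seq_doubling_code_inj in En as [-> ->]. reflexivity.
  - intros d [b [y [H1|[n [b0 E1]]]]] b'.
    + destruct (G3 d (ex_intro _ b (ex_intro _ y H1)) b') as [y' Hy']. exists y'; now left.
    + injection E1; intros _ _ ->. exists (E (2 * n + if b' then 1 else 0)). right. now exists n, b'.
  - intros x y [H1|[n [b E1]]].
    + destruct (G4 _ _ H1) as [b [z Hz]]. exists b, z; now left.
    + injection E1; intros -> _. destruct (seq_doubling_dom E (2 * n + if b then 1 else 0))
        as [b' [z Hz]]. exists b', z; now right.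
Qed.

Lemma partial_doubling_chain_union F :
  is_chain F -> (forall G, F G -> partial_doubling G) -> partial_doubling (chain_union F).
Proof.
  intros HF HP. split; [|split; [|split]].
  - intros x y y' [X [FX HX]] [Y [FY HY]].
    destruct (HF X Y FX FY) as [XY|YX];
      [apply (proj1 (HP Y FY) x) | apply (proj1 (HP X FX) x)]; auto.
  - intros x x' y [X [FX HX]] [Y [FY HY]].
    destruct (HF X Y FX FY) as [XY|YX];
      [apply (proj1 (proj2 (HP Y FY)) _ _ y) | apply (proj1 (proj2 (HP X FX)) _ _ y)]; auto.
  - intros d [b [y [X [FX HX]]]] b'.
    destruct (proj1 (proj2 (proj2 (HP X FX))) d (ex_intro _ b (ex_intro _ y HX)) b') as [y' Hy'].
    exists y', X; auto.
  - intros x y [X [FX HX]].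
    destruct (proj2 (proj2 (proj2 (HP X FX))) x y HX) as [b [z Hz]]. exists b, z, X; auto.
Qed.

Lemma card_le_sum_doubling_dom G :
  partial_doubling G -> card_le ({d | doubling_dom G d} + {d | doubling_dom G d}) {d | doubling_dom G d}.
Proof.
  intros [G1 [G2 [G3 G4]]].
  assert (Hh : forall (d : {d | doubling_dom G d}) (b : bool),
             {y : {d | doubling_dom G d} | G ((proj1_sig d, b), proj1_sig y)}).
  { intros [d Hd] b. apply constructive_indefinite_description.
    destruct (G3 d Hd b) as [y Hy]. now exists (exist _ y (G4 _ _ Hy)). }
  exists (fun z => match z with inl d => proj1_sig (Hh d false) | inr d => proj1_sig (Hh d true) end).
  intros [d|d] [d'|d']; destruct (Hh d _) as [y Hy]; destruct (Hh d' _) as [y' Hy']; simpl;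
    intros <-; assert (E := G2 _ _ _ Hy Hy'); injection E; intros; try discriminate;
    f_equal; apply eq_sig_hprop; auto using proof_irrelevance.
Qed.

Lemma exists_maximal_doubling (e : nat -> D) : (forall m n, e m = e n -> m = n) ->
  exists G, partial_doubling G /\ (forall n, doubling_dom G (e n)) /\
    ~ card_le nat {d | ~ doubling_dom G d}.
Proof.
  intros He.
  assert (Hempty : partial_doubling (fun _ => False)).
  { split; [|split; [|split]]; try tauto. intros d [b [y []]]. }
  assert (Hseq : partial_doubling (seq_doubling e)).
  { replace (seq_doubling e) with (fun p => (fun _ => False) p \/ seq_doubling e p)
      by (apply functional_extensionality; intro; apply propositional_extensionality; tauto).
    apply partial_doubling_add_seq; auto. intros n [b [y []]]. }
  set (P := fun G => partial_doubling G /\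
              ((forall p, ~ G p) \/ forall p, seq_doubling e p -> G p)).
  destruct (@zorn_sets _ P) as [G [[HG Hsub] Gmax]].
  - intros F FP HF. split.
    + apply partial_doubling_chain_union; auto. intros X FX; apply FP, FX.
    + destruct (classic (exists p, chain_union F p)) as [[p [X [FX Xp]]]|Hne].
      * right. intros p' Hp'. exists X; split; auto.
        destruct (proj2 (FP X FX)) as [Xe|Xe]; [exfalso; eapply Xe; eauto|auto].
      * left. intros p Hp. apply Hne; eauto.
  - assert (Hseq_sub : forall p, seq_doubling e p -> G p).
    { destruct Hsub as [Hsub|Hsub]; auto. intros p Hp.
      apply (Gmax (seq_doubling e)); auto; [intros q Gq; exfalso; eapply Hsub; eauto|].
      split; auto. }
    exists G. split; [auto|split].
    + intro n. destruct (seq_doubling_dom e n) as [b [y Hy]]. exists b, y; auto.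
    + intros [E' HE'].
      set (E := fun n => proj1_sig (E' n)).
      assert (HEinj : forall m n, E m = E n -> m = n).
      { intros m n Emn. apply HE'. apply eq_sig_hprop; auto using proof_irrelevance. }
      assert (Hout : forall n, ~ doubling_dom G (E n)) by (intro n; exact (proj2_sig (E' n))).
      apply (Hout 0). destruct (seq_doubling_dom E 0) as [b [y Hy]]. exists b, y.
      apply (Gmax (fun p => G p \/ seq_doubling E p)); [intros; now left| |now right].
      split; [apply partial_doubling_add_seq; auto|].
      right. intros p Hp. left; auto.
Qed.
End Doubling.

Lemma card_le_sum_self D : card_le nat D -> card_le (D + D) D.
Proof.
  intros [e He].
  destruct (exists_maximal_doubling He) as [G [HG [Hdom Hfin]]].
  set (X := {d | doubling_dom G d}). set (N := {d | ~ doubling_dom G d}).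
  assert (NX : card_le N X).
  { apply card_le_trans with (Y := nat).
    - apply listable_card_le_nat. apply NNPP; intro; auto using not_listable_card_le_nat.
    - exists (fun n => exist _ (e n) (Hdom n)). intros m n E. apply He.
      exact (f_equal (@proj1_sig _ _) E). }
  apply card_le_trans with (Y := ((X + N) + (X + N))%type); [apply card_le_sum; apply card_le_sig_sum|].
  apply card_le_trans with (Y := ((X + X) + (X + X))%type); [apply card_le_sum; apply card_le_sum; auto using card_le_refl|].
  apply card_le_trans with (Y := (X + X)%type); [apply card_le_sum; apply card_le_sum_doubling_dom; auto|].
  apply card_le_trans with (Y := X); [apply card_le_sum_doubling_dom; auto|apply card_le_sig].
Qed.

Lemma small_sum K X Y : card_le nat K -> small K X -> small K Y -> small K (X + Y).
Proof.
  intros HK.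
  assert (Hle : forall X Y, card_le X Y -> small K Y -> small K (X + Y)).
  { clear X Y. intros X Y XY sY KXY.
    assert (KYY : card_le K (Y + Y))
      by (apply (card_le_trans KXY); apply card_le_sum; auto using card_le_refl).
    destruct (classic (card_le nat Y)) as [nY|nY].
    - exact (sY (card_le_trans KYY (card_le_sum_self nY))).
    - exact (nY (card_le_nat_sum_diag (card_le_trans HK KYY))). }
  intros sX sY.
  destruct (card_le_total X Y) as [XY|YX]; [now apply Hle|].
  apply (small_card_le (card_le_sum_comm X Y)). now apply Hle.
Qed.

Lemma subset_small_union K T (A B : T -> Prop) : card_le nat K ->
  subset_small K A -> subset_small K B -> subset_small K (fun x => A x \/ B x).
Proof.
  intros HK sA sB. apply (@small_card_le K _ ({x | A x} + {x | B x})); [|now apply small_sum].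
  exists (fun p : {x | A x \/ B x} =>
    match excluded_middle_informative (A (proj1_sig p)) with
    | left h => inl (exist _ _ h)
    | right h => inr (exist _ _ (match proj2_sig p with or_introl a => False_ind _ (h a) | or_intror b => b end))
    end).
  intros [a Ha] [b Hb]; simpl.
  destruct (excluded_middle_informative (A a)); destruct (excluded_middle_informative (A b));
    intro E; try discriminate; injection E; intros ->; f_equal; apply proof_irrelevance.
Qed.

Lemma subset_small_image K J T (P : J -> T -> Prop) :
  (forall j c c', P j c -> P j c' -> c = c') -> small K J ->
  subset_small K (fun c => exists j, P j c).
Proof.
  intros Hf. apply small_card_le.
  exists (fun p : {c | exists j, P j c} => proj1_sig (constructive_indefinite_description _ (proj2_sig p))).
  intros [a Ha] [b Hb]; simpl.
  destruct (constructive_indefinite_description _ Ha) as [j Pj].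
  destruct (constructive_indefinite_description _ Hb) as [j' Pj']. simpl. intros <-.
  assert (a = b) as -> by eauto. f_equal. apply proof_irrelevance.
Qed.

Lemma subset_small_range K J T (f : J -> T) : small K J -> subset_small K (range f).
Proof. apply (@subset_small_image K J T (fun j c => f j = c)). congruence. Qed.

(** * First-order syntax and semantics *)

Section Syntax.
Variable L : language.

Fixpoint term_ind_nested (P : term L -> Prop) (Hv : forall k, P (tvar L k))
  (Ha : forall f ts, (forall i, P (ts i)) -> P (@tapp L f ts)) (t : term L) : P t :=
  match t with
  | tvar _ k => Hv k
  | @tapp _ f ts => Ha f ts (fun i => term_ind_nested Hv Ha (ts i))
  end.

Lemma eval_ext (M : structure L) (v w : nat -> M) t :
  (forall n, fv_term t n -> v n = w n) -> eval v t = eval w t.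
Proof.
  induction t using term_ind_nested; simpl; intros Hv.
  - apply Hv; reflexivity.
  - f_equal. apply functional_extensionality; intro i. apply H. intros n Hn; apply Hv; eauto.
Qed.

Lemma sat_ext (M : structure L) (phi : formula L) : forall (v w : nat -> M),
  (forall n, fv phi n -> v n = w n) -> (sat v phi <-> sat w phi).
Proof.
  induction phi; simpl; intros v w H.
  - rewrite (eval_ext (t:=t) (v:=v) (w:=w)), (eval_ext (t:=t0) (v:=v) (w:=w)); auto; tauto.
  - replace (fun i => eval v (t i)) with (fun i => eval w (t i)); [tauto|].
    apply functional_extensionality; intro i; symmetry; apply eval_ext; eauto.
  - rewrite (IHphi v w); auto; tauto.
  - rewrite (IHphi1 v w), (IHphi2 v w); auto; tauto.
  - split; intros [m Hm]; exists m; revert Hm; apply IHphi; intros k Hk; unfold upd;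
      destruct (Nat.eqb_spec k n); auto.
    all: first [ apply H; auto | symmetry; apply H; auto ].
Qed.

Definition isomorphism (S1 S2 : structure L) (F : S1 -> S2) : Prop :=
  (forall a b, F a = F b -> a = b) /\ (forall b, exists a, F a = b) /\
  (forall f args, F (ifun S1 f args) = ifun S2 f (fun i => F (args i))) /\
  (forall r args, irel S1 r args <-> irel S2 r (fun i => F (args i))).

Lemma iso_eval S1 S2 F (HF : @isomorphism S1 S2 F) (v : nat -> S1) t :
  eval (fun n => F (v n)) t = F (eval v t).
Proof.
  destruct HF as [_ [_ [Hf _]]].
  induction t using term_ind_nested; simpl; auto.
  rewrite Hf. f_equal. apply functional_extensionality; auto.
Qed.

Lemma iso_sat S1 S2 F (HF : @isomorphism S1 S2 F) phi : forall (v : nat -> S1),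
  sat (fun n => F (v n)) phi <-> sat v phi.
Proof.
  pose proof HF as [Hi [Hs [Hfun Hr]]].
  induction phi; simpl; intro v.
  - rewrite !(iso_eval HF). split; intro E; [apply Hi; auto | rewrite E; auto].
  - rewrite Hr.
    replace (fun i => F (eval v (t i))) with (fun i => eval (fun n => F (v n)) (t i)); [tauto|].
    apply functional_extensionality; intro; apply (iso_eval HF).
  - rewrite IHphi; tauto.
  - rewrite IHphi1, IHphi2; tauto.
  - split.
    + intros [m Hm]. destruct (Hs m) as [m1 E]. subst m.
      exists m1. apply IHphi. revert Hm. apply sat_ext. intros k _. unfold upd.
      destruct (Nat.eqb k n); auto.
    + intros [m1 Hm]. exists (F m1). apply IHphi in Hm. revert Hm. apply sat_ext. intros k _. unfold upd.
      destruct (Nat.eqb k n); auto.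
Qed.

Fixpoint term_rename (r : nat -> nat) (t : term L) : term L :=
  match t with
  | tvar _ k => tvar L (r k)
  | @tapp _ f ts => @tapp L f (fun i => term_rename r (ts i))
  end.

Fixpoint formula_rename (r : nat -> nat) (phi : formula L) : formula L :=
  match phi with
  | feq t u => feq (term_rename r t) (term_rename r u)
  | @frel _ R ts => @frel L R (fun i => term_rename r (ts i))
  | fneg p => fneg (formula_rename r p)
  | fand p q => fand (formula_rename r p) (formula_rename r q)
  | fex k p => fex (r k) (formula_rename r p)
  end.

Lemma term_rename_eval (M : structure L) (v : nat -> M) r t :
  eval v (term_rename r t) = eval (fun n => v (r n)) t.
Proof.
  induction t using term_ind_nested; simpl; auto. f_equal; apply functional_extensionality; auto.
Qed.

Lemma formula_rename_sat (M : structure L) r (Hr : forall a b, r a = r b -> a = b) phi :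
  forall (v : nat -> M), sat v (formula_rename r phi) <-> sat (fun n => v (r n)) phi.
Proof.
  induction phi; simpl; intro v.
  - rewrite !term_rename_eval; tauto.
  - replace (fun i => eval v (term_rename r (t i))) with (fun i => eval (fun n => v (r n)) (t i)); [tauto|].
    apply functional_extensionality; intro; rewrite term_rename_eval; auto.
  - rewrite IHphi; tauto.
  - rewrite IHphi1, IHphi2; tauto.
  - split; intros [m Hm]; exists m; [apply IHphi in Hm|apply IHphi]; revert Hm; apply sat_ext;
      intros k _; unfold upd; destruct (Nat.eqb_spec k n); destruct (Nat.eqb_spec (r k) (r n));
      subst; auto; exfalso; auto.
Qed.

Lemma term_rename_fv r t n : fv_term (term_rename r t) n -> exists m, n = r m /\ fv_term t m.
Proof.
  induction t using term_ind_nested; simpl.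
  - intro; subst; eauto.
  - intros [i Hi]. destruct (H i Hi) as [m [E Hm]]. exists m; split; eauto.
Qed.

Lemma formula_rename_fv r (Hr : forall a b, r a = r b -> a = b) phi n :
  fv (formula_rename r phi) n -> exists m, n = r m /\ fv phi m.
Proof.
  revert n; induction phi; simpl; intros n0 H.
  - destruct H as [H|H]; apply term_rename_fv in H; destruct H as [m [E Hm]]; eauto.
  - destruct H as [i Hi]; apply term_rename_fv in Hi; destruct Hi as [m [E Hm]]; eauto.
  - auto.
  - destruct H as [H|H]; [apply IHphi1 in H|apply IHphi2 in H]; destruct H as [m [E Hm]]; eauto.
  - destruct H as [Hne H]. apply IHphi in H. destruct H as [m [E Hm]]. subst.
    exists m; split; [reflexivity|]. split; [|exact Hm]. intro; subst; auto.
Qed.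

Fixpoint fin_enum (n : nat) : list (Fin.t n) :=
  match n with 0 => nil | S n => Fin.F1 :: map Fin.FS (fin_enum n) end.

Lemma fin_enum_complete n (i : Fin.t n) : In i (fin_enum n).
Proof.
  induction i; simpl; auto. right. apply in_map; auto.
Qed.

Fixpoint term_vars (t : term L) : list nat :=
  match t with
  | tvar _ k => k :: nil
  | @tapp _ f ts => flat_map (fun i => term_vars (ts i)) (fin_enum (fun_ar f))
  end.

Fixpoint formula_vars (phi : formula L) : list nat :=
  match phi with
  | feq t u => term_vars t ++ term_vars u
  | @frel _ R ts => flat_map (fun i => term_vars (ts i)) (fin_enum (rel_ar R))
  | fneg p => formula_vars p
  | fand p q => formula_vars p ++ formula_vars q
  | fex k p => formula_vars p
  end.

Lemma term_vars_fv t n : fv_term t n -> In n (term_vars t).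
Proof.
  induction t using term_ind_nested; simpl.
  - auto.
  - intros [i Hi]. apply in_flat_map. exists i; split; auto. apply fin_enum_complete.
Qed.

Lemma formula_vars_fv phi n : fv phi n -> In n (formula_vars phi).
Proof.
  induction phi; simpl; intro H.
  - apply in_or_app; destruct H; [left|right]; apply term_vars_fv; auto.
  - destruct H as [i Hi]. apply in_flat_map. exists i; split; [apply fin_enum_complete|apply term_vars_fv; auto].
  - auto.
  - apply in_or_app; destruct H; auto.
  - apply IHphi, H.
Qed.

Definition ftrue : formula L := fneg (fex 0 (fneg (feq (tvar L 0) (tvar L 0)))).

Lemma ftrue_sat (M : structure L) (v : nat -> M) : sat v ftrue.
Proof. simpl. intros [m Hm]. apply Hm. reflexivity. Qed.

Lemma ftrue_fv n : ~ fv ftrue n.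
Proof. simpl. intros [H1 [H2|H2]]; simpl in H2; auto. Qed.

Definition bigand (l : list (formula L)) : formula L := fold_right (@fand L) ftrue l.

Lemma bigand_sat (M : structure L) (v : nat -> M) l :
  sat v (bigand l) <-> forall phi, In phi l -> sat v phi.
Proof.
  induction l; simpl.
  - split; [tauto|]. intros _; exact (ftrue_sat (v:=v)).
  - rewrite IHl. split; [intros [H1 H2] phi [E|E]; subst; auto|intros H; split; auto].
Qed.

Lemma bigand_fv l n : fv (bigand l) n -> exists phi, In phi l /\ fv phi n.
Proof.
  induction l; simpl; intro H.
  - exfalso; exact (ftrue_fv (n:=n) H).
  - destruct H as [H|H]; [exists a; auto|]. destruct (IHl H) as [p [Hp1 Hp2]]; eauto.
Qed.

Definition fexists_list (l : list nat) (psi : formula L) : formula L := fold_right (@fex L) psi l.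

Lemma fexists_list_sat (M : structure L) l psi : forall (v : nat -> M),
  sat v (fexists_list l psi) <-> exists w, (forall n, ~ In n l -> w n = v n) /\ sat w psi.
Proof.
  induction l; simpl; intro v.
  - split; [intro H; exists v; auto|]. intros [w [Hw H]]. revert H; apply sat_ext; intros n _; symmetry; apply Hw; auto.
  - split.
    + intros [m Hm]. apply IHl in Hm. destruct Hm as [w [Hw H]]. exists w; split; auto.
      intros n Hn. rewrite Hw by tauto. unfold upd. destruct (Nat.eqb_spec n a); subst; tauto.
    + intros [w [Hw H]]. exists (w a). apply IHl. exists w; split; auto.
      intros n Hn. unfold upd. destruct (Nat.eqb_spec n a); subst; auto. apply Hw; intros [E|E]; [congruence|auto].
Qed.

Lemma fexists_list_fv l psi n : fv (fexists_list l psi) n -> ~ In n l /\ fv psi n.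
Proof.
  induction l; simpl; intro H; auto.
  destruct H as [H1 H2]. apply IHl in H2. destruct H2; split; auto. intros [E|E]; auto.
Qed.

End Syntax.

Definition decb (P : Prop) : bool := if excluded_middle_informative P then true else false.
Lemma decb_true (P : Prop) : P -> decb P = true.
Proof. unfold decb; destruct (excluded_middle_informative P); tauto. Qed.
Lemma decb_false (P : Prop) : ~ P -> decb P = false.
Proof. unfold decb; destruct (excluded_middle_informative P); tauto. Qed.
Lemma decbP (P : Prop) : decb P = true <-> P.
Proof. unfold decb; destruct (excluded_middle_informative P); split; auto; discriminate. Qed.

Section ParametricFormulas.
Variables (L : language) (C : structure L) (I : Type).

Lemma psat_ext (b b' : I -> C) (phi : formula L) s :
  (forall n i, fv phi n -> s n = inl i -> b i = b' i) -> (psat b (phi, s) <-> psat b' (phi, s)).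
Proof.
  intro H. unfold psat; simpl. apply sat_ext. intros n Hn. unfold valuation.
  destruct (s n) eqn:E; auto. eapply H; eauto.
Qed.

Definition var_even (n : nat) := 2 * n.
Definition var_odd (n : nat) := 2 * n + 1.
Lemma var_even_inj a b : var_even a = var_even b -> a = b. Proof. unfold var_even; lia. Qed.
Lemma var_odd_inj a b : var_odd a = var_odd b -> a = b. Proof. unfold var_odd; lia. Qed.
Lemma even_var_even n : Nat.even (var_even n) = true. Proof. apply Nat.even_even. Qed.
Lemma even_var_odd n : Nat.even (var_odd n) = false. Proof. apply Nat.even_odd. Qed.
Lemma div2_var_even n : Nat.div2 (var_even n) = n. Proof. apply Nat.div2_double. Qed.
Lemma div2_var_odd n : Nat.div2 (var_odd n) = n.
Proof. unfold var_odd. rewrite Nat.add_1_r. apply Nat.div2_succ_double. Qed.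

(* The variables of the head are renamed to even numbers and those of the tail to odd
   ones, so that their assignments can be merged. *)
Fixpoint pconj (i0 : I) (l : list (pformula I C)) : pformula I C :=
  match l with
  | nil => (ftrue L, fun _ => inl i0)
  | x :: l => let y := pconj i0 l in
      (fand (formula_rename var_even (fst x)) (formula_rename var_odd (fst y)),
       fun n => if Nat.even n then snd x (Nat.div2 n) else snd y (Nat.div2 n))
  end.

Lemma psat_pconj i0 l (b : I -> C) : psat b (pconj i0 l) <-> forall x, In x l -> psat b x.
Proof.
  induction l as [|[phi s] l IH]; simpl.
  - unfold psat; simpl. split; [tauto|]. intros _. exact (ftrue_sat (v:=valuation b (fun _ => inl i0))).
  - unfold psat at 1; simpl. rewrite (formula_rename_sat var_even_inj), (formula_rename_sat var_odd_inj).
    assert (E1 : sat (fun n => valuation b (fun n0 => if Nat.even n0 then s (Nat.div2 n0)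
               else snd (pconj i0 l) (Nat.div2 n0)) (var_even n)) phi <-> psat b (phi, s)).
    { unfold psat; simpl. apply sat_ext. intros n _. unfold valuation. rewrite even_var_even, div2_var_even. auto. }
    assert (E2 : sat (fun n => valuation b (fun n0 => if Nat.even n0 then s (Nat.div2 n0)
               else snd (pconj i0 l) (Nat.div2 n0)) (var_odd n)) (fst (pconj i0 l)) <-> psat b (pconj i0 l)).
    { unfold psat; simpl. apply sat_ext. intros n _. unfold valuation. rewrite even_var_odd, div2_var_odd. auto. }
    rewrite E1, E2, IH. split.
    + intros [H1 H2] x [E|E]; subst; auto.
    + intros H; split; auto.
Qed.

Lemma over_pconj (A : C -> Prop) i0 l : (forall x, In x l -> over A x) -> over A (pconj i0 l).
Proof.
  induction l as [|[phi s] l IH]; simpl; intros H.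
  - intros n c Hn. exfalso; exact (ftrue_fv (n:=n) Hn).
  - intros n c Hn Hs. simpl in Hn, Hs. destruct Hn as [Hn|Hn].
    + apply (formula_rename_fv var_even_inj) in Hn. destruct Hn as [m [E Hm]]. subst.
      rewrite even_var_even, div2_var_even in Hs. exact (H (phi, s) (or_introl eq_refl) m c Hm Hs).
    + apply (formula_rename_fv var_odd_inj) in Hn. destruct Hn as [m [E Hm]]. subst.
      rewrite even_var_odd, div2_var_odd in Hs. exact (IH (fun x h => H x (or_intror h)) m c Hm Hs).
Qed.

Definition coords (x : pformula I C) : list I :=
  flat_map (fun n => match snd x n with inl i => i :: nil | inr _ => nil end) (formula_vars (fst x)).

Lemma coords_complete phi s n i : fv phi n -> s n = inl i -> In i (coords (phi, s)).
Proof.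
  intros Hn Hs. unfold coords. apply in_flat_map. exists n. split.
  - apply formula_vars_fv; auto.
  - simpl. rewrite Hs. left; auto.
Qed.

Section ExistentialClosure.
Variables (j : I) (D : I -> Prop) (gv : I -> C).

Definition hidden_var (s : nat -> I + C) (n : nat) : Prop :=
  match s n with inl i => i <> j /\ ~ D i | inr _ => False end.

Definition hidden_vars (x : pformula I C) : list nat := filter (fun n => decb (hidden_var (snd x) n)) (formula_vars (fst x)).

Definition hidden_eqs (x : pformula I C) : formula L :=
  bigand (map (fun p => feq (tvar L (fst p)) (tvar L (snd p)))
     (filter (fun p => decb (snd x (fst p) = snd x (snd p))) (list_prod (hidden_vars x) (hidden_vars x)))).

Definition theta_assign (s : nat -> I + C) : nat -> unit + C :=
  fun n => match s n with
           | inr c => inr c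
           | inl i => if decb (i = j) then inl tt else if decb (D i) then inr (gv i) else inl tt
           end.

(* [theta x] is the one-variable formula in the [j]-th coordinate obtained from [x] by
   substituting the parameter [gv i] for each coordinate [i] in [D] and quantifying out
   all other coordinates; [hidden_eqs] records that two variable numbers denoting the
   same coordinate must receive the same witness. *)
Definition theta (x : pformula I C) : pformula unit C :=
  (fexists_list (hidden_vars x) (fand (hidden_eqs x) (fst x)), theta_assign (snd x)).

Lemma hidden_eqs_sat x (w : nat -> C) : sat w (hidden_eqs x) <->
  forall n m, In n (hidden_vars x) -> In m (hidden_vars x) -> snd x n = snd x m -> w n = w m.
Proof.
  unfold hidden_eqs. rewrite bigand_sat. split.
  - intros H n m Hn Hm E. specialize (H (feq (tvar L n) (tvar L m))). simpl in H. apply H.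
    apply in_map_iff. exists (n, m). split; auto. apply filter_In. split.
    + apply in_prod; auto.
    + apply decb_true; auto.
  - intros H phi Hphi. apply in_map_iff in Hphi. destruct Hphi as [[n m] [E Hin]]. subst. simpl.
    apply filter_In in Hin. destruct Hin as [Hin Hd]. apply in_prod_iff in Hin. simpl in Hd.
    apply (proj1 (decbP _)) in Hd. apply H; [tauto|tauto|exact Hd].
Qed.

Lemma hidden_eqs_fv x n : fv (hidden_eqs x) n -> In n (hidden_vars x).
Proof.
  unfold hidden_eqs. intro H. apply bigand_fv in H. destruct H as [phi [Hin Hfv]].
  apply in_map_iff in Hin. destruct Hin as [[a b] [E Hin]]. subst. simpl in Hfv.
  apply filter_In in Hin. destruct Hin as [Hin _]. apply in_prod_iff in Hin.
  destruct Hfv as [H|H]; simpl in H; subst; tauto.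
Qed.

Lemma in_hidden_vars x n :
  In n (hidden_vars x) <-> In n (formula_vars (fst x)) /\ hidden_var (snd x) n.
Proof. unfold hidden_vars. rewrite filter_In, decbP. tauto. Qed.

Lemma theta_valuation_visible phi s (b : I -> C) n :
  fv phi n -> ~ In n (hidden_vars (phi, s)) -> (forall i, D i -> b i = gv i) ->
  valuation (fun _ : unit => b j) (theta_assign s) n = valuation b s n.
Proof.
  intros Hn HQ HbD. unfold valuation, theta_assign.
  destruct (s n) as [i|d] eqn:Es; auto.
  assert (Hvis : ~ hidden_var s n).
  { intro Hh. apply HQ, in_hidden_vars. split; [apply formula_vars_fv; auto|exact Hh]. }
  unfold hidden_var in Hvis; rewrite Es in Hvis.
  destruct (classic (i = j)) as [->|Nij]; [now rewrite decb_true|].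
  rewrite decb_false by auto. assert (Di : D i) by (apply NNPP; intro; auto).
  rewrite decb_true by auto. symmetry; auto.
Qed.

Lemma theta_sat_intro (x : pformula I C) (b : I -> C) :
  (forall i, D i -> b i = gv i) -> psat b x -> psat (fun _ : unit => b j) (theta x).
Proof.
  destruct x as [phi s]. intros HbD Hphi. unfold theta, psat; simpl.
  apply fexists_list_sat.
  exists (fun n => if decb (In n (hidden_vars (phi, s))) then valuation b s n
                  else valuation (fun _ : unit => b j) (theta_assign s) n).
  split; [|split].
  - intros n Hn. now rewrite decb_false.
  - apply (hidden_eqs_sat (phi, s)). simpl. intros n m Hn Hm E. rewrite !decb_true by auto.
    unfold valuation; now rewrite E.
  - revert Hphi. apply sat_ext. intros n Hn.
    destruct (classic (In n (hidden_vars (phi, s)))) as [HQ|HQ].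
    + now rewrite decb_true.
    + rewrite decb_false by auto. cbn [snd]. apply (theta_valuation_visible (phi := phi)); auto.
Qed.

Lemma theta_sat_elim (nDj : ~ D j) (x : pformula I C) (c : C) :
  psat (fun _ : unit => c) (theta x) ->
  exists b, b j = c /\ (forall i, D i -> b i = gv i) /\ psat b x.
Proof.
  destruct x as [phi s]. unfold theta, psat; simpl.
  rewrite fexists_list_sat. intros [w [Hw [HE Hphi]]].
  rewrite (hidden_eqs_sat (phi, s)) in HE. simpl in HE.
  set (b := fun i => if decb (i = j) then c else if decb (D i) then gv i else
              epsilon (inhabits c)
                (fun d => exists n, In n (hidden_vars (phi, s)) /\ s n = inl i /\ w n = d)).
  assert (Hbj : b j = c) by (unfold b; now rewrite decb_true).
  assert (HbD : forall i, D i -> b i = gv i).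
  { intros i Di. unfold b. rewrite decb_false by (intros ->; auto). now rewrite decb_true. }
  exists b. split; [|split]; auto.
  revert Hphi. apply sat_ext. intros n Hn.
  destruct (classic (In n (hidden_vars (phi, s)))) as [HQ|HQ].
  - pose proof HQ as [_ Hh]%in_hidden_vars. unfold hidden_var in Hh; simpl in Hh.
    unfold valuation. destruct (s n) as [i|d] eqn:Es; [|contradiction]. destruct Hh as [Hij HDi].
    unfold b. rewrite !decb_false by auto.
    assert (Hex : exists d n, In n (hidden_vars (phi, s)) /\ s n = inl i /\ w n = d) by eauto.
    destruct (epsilon_spec (inhabits c) _ Hex) as [n' [Hn' [Es' <-]]].
    apply HE; auto. congruence.
  - rewrite Hw by auto. rewrite <- Hbj. symmetry. apply (theta_valuation_visible (phi := phi)); auto.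
Qed.

Lemma theta_over (A : C -> Prop) x : over A x ->
  over (fun c => A c \/ exists i, D i /\ gv i = c) (theta x).
Proof.
  destruct x as [phi s]. intros Hov n c Hn Hs. unfold theta in *; simpl in *.
  apply fexists_list_fv in Hn. destruct Hn as [HnQ [Hn|Hn]]; simpl in Hn.
  - exfalso; apply HnQ; apply hidden_eqs_fv; auto.
  - unfold theta_assign in Hs. destruct (s n) as [i|d] eqn:Es.
    + destruct (decb (i = j)); [discriminate|].
      destruct (decb (D i)) eqn:Ed; [|discriminate]. injection Hs; intro; subst.
      right; exists i; split; auto. apply decbP; auto.
    + injection Hs; intro; subst. left. exact (Hov n c Hn Es).
Qed.

End ExistentialClosure.
End ParametricFormulas.

Lemma psat_coords L (C : structure L) I (b b' : I -> C) (x : pformula I C) :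
  (forall i, In i (coords x) -> b i = b' i) -> psat b x -> psat b' x.
Proof.
  destruct x as [phi s]. intro H. apply psat_ext. intros n i Hn Hs. symmetry.
  apply H. eapply coords_complete; eauto.
Qed.

(** * Saturation for small tuples *)

Section Saturation.
Variables (L : language) (C : structure L) (I : Type) (Sigma : pformula I C -> Prop).
Hypothesis Hfs : fin_sat Sigma.

Definition assigned (G : I * C -> Prop) (i : I) : Prop := exists c, G (i, c).

Definition consistent_assignment (G : I * C -> Prop) : Prop :=
  (forall i c c', G (i, c) -> G (i, c') -> c = c') /\
  (forall l ps, (forall x, In x l -> Sigma x) -> (forall p, In p ps -> G p) ->
     exists b : I -> C, (forall p, In p ps -> b (fst p) = snd p) /\ forall x, In x l -> psat b x).

Lemma consistent_chain_union F :
  is_chain F -> (forall G, F G -> consistent_assignment G) -> consistent_assignment (chain_union F).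
Proof.
  intros HF HG. split.
  - intros i c c' [X [FX HX]] [Y [FY HY]].
    destruct (HF X Y FX FY) as [XY|YX];
      [apply (proj1 (HG Y FY) i) | apply (proj1 (HG X FX) i)]; auto.
  - intros l ps Hl Hps.
    destruct (chain_union_list HF Hps) as [->|[X [FX HX]]].
    + destruct (Hfs Hl) as [b Hb]. exists b; split; auto. intros p [].
    + apply (proj2 (HG X FX)); auto.
Qed.

Lemma consistent_total_realizes G (gv : I -> C) :
  consistent_assignment G -> (forall i, G (i, gv i)) -> realizes gv Sigma.
Proof.
  intros [_ HG] Hgv x Hx.
  destruct (HG (x :: nil) (map (fun i => (i, gv i)) (coords x))) as [b0 [Hb0ps Hb0]].
  - intros y [<-|[]]; auto.
  - intros p Hp. apply in_map_iff in Hp as [i [<- _]]. apply Hgv.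
  - apply (psat_coords (b := b0)); [|apply Hb0; now left].
    intros i Hi. apply (Hb0ps (i, gv i)). apply in_map_iff. now exists i.
Qed.

Section Extension.
Variables (G : I * C -> Prop) (gv : I -> C) (j : I).
Hypotheses (HG : consistent_assignment G) (Hgv : forall i, assigned G i -> G (i, gv i))
  (Hj : ~ assigned G j).

Definition extension_type : pformula unit C -> Prop :=
  fun th => exists l, (forall x, In x l -> Sigma x) /\ th = theta j (assigned G) gv (pconj j l).

Lemma extension_type_over (A : C -> Prop) : (forall x, Sigma x -> over A x) ->
  forall th, extension_type th -> over (fun c => A c \/ exists i, assigned G i /\ gv i = c) th.
Proof.
  intros Hover th [l [Hl ->]]. apply theta_over, over_pconj. intros; apply Hover; auto.
Qed.

Lemma extension_type_fin_sat : fin_sat extension_type.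
Proof.
  intros ls Hls.
  assert (Hcol : exists l0, (forall x, In x l0 -> Sigma x) /\ forall th, In th ls ->
            exists l, incl l l0 /\ th = theta j (assigned G) gv (pconj j l)).
  { clear -Hls. induction ls as [|th ls IH].
    - exists nil; split; [intros x []|intros th []].
    - destruct (Hls th (or_introl eq_refl)) as [l [Hl E]].
      destruct (IH (fun t h => Hls t (or_intror h))) as [l0 [Hl0 Hl0']].
      exists (l ++ l0). split.
      + intros x [Hx|Hx]%in_app_or; auto.
      + intros t [<-|Ht].
        * exists l; split; auto. apply incl_appl, incl_refl.
        * destruct (Hl0' t Ht) as [l' [Hl' E']]. exists l'; split; auto. now apply incl_appr. }
  destruct Hcol as [l0 [Hl0 Hl0']].
  set (ps := map (fun i => (i, gv i))
               (filter (fun i => decb (assigned G i)) (flat_map (@coords L C I) l0))).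
  destruct (proj2 HG l0 ps Hl0) as [b0 [Hb0ps Hb0]].
  { intros p Hp. apply in_map_iff in Hp as [i [<- Hi]].
    apply filter_In in Hi as [_ Hd]. rewrite decbP in Hd. auto. }
  set (b := fun i => if decb (assigned G i) then gv i else b0 i).
  assert (Hb : forall x, In x l0 -> psat b x).
  { intros x Hx. apply (psat_coords (b := b0)); auto.
    intros i Hi. unfold b. destruct (classic (assigned G i)) as [Di|nDi].
    - rewrite decb_true by auto. apply (Hb0ps (i, gv i)). apply in_map_iff. exists i; split; auto.
      apply filter_In. split; [|now apply decb_true]. apply in_flat_map. eauto.
    - now rewrite decb_false. }
  exists (fun _ => b j). intros th Hth. destruct (Hl0' th Hth) as [l [Hl ->]].
  apply theta_sat_intro.
  - intros i Di; unfold b; now rewrite decb_true.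
  - apply psat_pconj. auto.
Qed.

Lemma consistent_extend (c : C) : (forall th, extension_type th -> psat (fun _ : unit => c) th) ->
  consistent_assignment (fun p => G p \/ p = (j, c)).
Proof.
  intros Hc. destruct HG as [G1 G2]. split.
  - intros i c1 c2 [H1|H1] [H2|H2]; try congruence.
    + eapply G1; eauto.
    + injection H2 as -> ->. exfalso; apply Hj; eexists; eauto.
    + injection H1 as -> ->. exfalso; apply Hj; eexists; eauto.
  - intros l ps Hl Hps.
    destruct (theta_sat_elim Hj (Hc _ (ex_intro _ l (conj Hl eq_refl)))) as [b [Hbj [HbD Hbl]]].
    exists b. split.
    + intros [i c'] Hp. simpl. destruct (Hps _ Hp) as [Gp|Ep].
      * rewrite HbD by (eexists; eauto). eapply G1; [apply Hgv; eexists|]; eauto.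
      * now injection Ep as -> ->.
    + exact (proj1 (psat_pconj j l b) Hbl).
Qed.

End Extension.

Theorem realize_type K (HK : card_le nat K) (Hsat : kappa_saturated K C) (HI : small K I)
  (A : C -> Prop) (HA : subset_small K A) (Hover : forall x, Sigma x -> over A x) :
  exists b : I -> C, realizes b Sigma.
Proof.
  destruct (@Hfs nil (fun x h => False_ind _ h)) as [b0 _].
  destruct (@zorn_sets _ consistent_assignment) as [G [HG Gmax]].
  { intros F FG HF. apply consistent_chain_union; auto. }
  set (gv := fun i => epsilon (inhabits (b0 i)) (fun c => G (i, c))).
  assert (Hgv : forall i, assigned G i -> G (i, gv i)) by (intros i Hi; apply epsilon_spec, Hi).
  exists gv. apply (consistent_total_realizes HG). intro j. apply Hgv, NNPP. intro Hj.
  set (A' := fun c => A c \/ exists i, assigned G i /\ gv i = c).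
  assert (sA' : subset_small K A').
  { apply subset_small_union; auto.
    apply (@subset_small_image K I C (fun i c => assigned G i /\ gv i = c)); auto.
    intros i c c' [_ E1] [_ E2]; congruence. }
  destruct (Hsat A' sA' _ (extension_type_over (j := j) Hover)
              (extension_type_fin_sat (j := j) HG Hgv))
    as [c Hc].
  apply Hj. exists (c tt). apply (Gmax (fun p => G p \/ p = (j, c tt))); [intros; now left| |now right].
  apply (consistent_extend (gv := gv)); auto.
  intros th Hth. replace (fun _ : unit => c tt) with c; auto.
  apply functional_extensionality; now intros [].
Qed.

End Saturation.

(** * Automorphisms and Lascar chains *)

Section Automorphisms.
Variables (L : language) (C : structure L).

Lemma automorphism_inverse g h : automorphism C g -> (forall x, h (g x) = x) -> (forall x, g (h x) = x) ->
  automorphism C h.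
Proof.
  intros [Hi [Hs [Hf Hr]]] hg gh. split; [|split; [|split]].
  - intros a b E. rewrite <- (gh a), <- (gh b), E; auto.
  - intros b. exists (g b); auto.
  - intros f args. apply Hi. rewrite gh, Hf. f_equal. apply functional_extensionality; intro; rewrite gh; auto.
  - intros r args. rewrite (Hr r (fun i => h (args i))).
    replace (fun i => g (h (args i))) with args; [tauto|]. apply functional_extensionality; auto.
Qed.

Lemma automorphism_has_inverse g : automorphism C g -> exists h, automorphism C h /\
  (forall x, h (g x) = x) /\ (forall x, g (h x) = x).
Proof.
  intros Hg. pose proof Hg as [Hi [Hs _]].
  set (h := fun y => proj1_sig (constructive_indefinite_description _ (Hs y))).
  assert (gh : forall x, g (h x) = x).
  { intro x; unfold h; destruct (constructive_indefinite_description _ _); auto. }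
  assert (hg : forall x, h (g x) = x) by (intro x; apply Hi; rewrite gh; auto).
  exists h; split; auto. eapply automorphism_inverse; eauto.
Qed.

Definition map_params I (g : C -> C) (s : nat -> I + C) : nat -> I + C :=
  fun n => match s n with inl i => inl i | inr c => inr (g c) end.

Lemma psat_automorphism I g (Hg : automorphism C g) (b : I -> C) phi s :
  psat (fun i => g (b i)) (phi, map_params g s) <-> psat b (phi, s).
Proof.
  unfold psat; simpl. rewrite <- (iso_sat Hg phi (valuation b s)).
  apply sat_ext. intros n _. unfold valuation, map_params. destruct (s n); auto.
Qed.

Lemma equiv_over_automorphism I (M : C -> Prop) (a b : I -> C) g h :
  automorphism C g -> (forall x, h (g x) = x) -> (forall x, g (h x) = x) ->
  equiv_over M a b -> equiv_over (fun c => M (h c)) (fun i => g (a i)) (fun i => g (b i)).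
Proof.
  intros Hg hg gh He [phi s] Hov.
  set (s0 := map_params h s).
  assert (Es : map_params g s0 = s).
  { apply functional_extensionality; intro n. unfold s0, map_params. destruct (s n); auto. rewrite gh; auto. }
  assert (Hov0 : over M (phi, s0)).
  { intros n c Hn Hs. unfold s0, map_params in Hs. simpl in Hs. destruct (s n) eqn:E; [discriminate|].
    injection Hs; intro Ec; subst c. exact (Hov n c0 Hn E). }
  rewrite <- Es. rewrite !psat_automorphism by auto. apply He; auto.
Qed.

Lemma equiv_over_sym I (M : C -> Prop) (a b : I -> C) : equiv_over M a b -> equiv_over M b a.
Proof. intros H x Hx. split; intro; apply (H x Hx); auto. Qed.

Lemma small_model_preimage K (M : C -> Prop) h : automorphism C h -> small_model K M ->
  small_model K (fun c => M (h c)).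
Proof.
  intros Hh [sM [[x0 Mx0] [HM Hel]]]. pose proof Hh as [Hi [Hs [Hf Hr]]].
  split.
  - unfold subset_small in *. apply (small_card_le (Y := {x | M x})); auto.
    exists (fun p : {c | M (h c)} => exist _ (h (proj1_sig p)) (proj2_sig p)).
    intros [a Ha] [b Hb] E. injection E; intro E'. apply Hi in E'. subst. f_equal; apply proof_irrelevance.
  - split.
    + destruct (Hs x0) as [x Ex]. exists x. rewrite Ex; auto.
    + assert (HM' : fclosed (fun c => M (h c))).
      { intros f args Hargs. rewrite Hf. apply HM. auto. }
      exists HM'. intros phi v.
      set (F := fun p : substr HM' => (exist _ (h (proj1_sig p)) (proj2_sig p) : substr HM)).
      assert (HF : isomorphism F).
      { split; [|split; [|split]].
        - intros [a Ha] [b Hb] E. unfold F in E; simpl in E. injection E; intro E'. apply Hi in E'.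
          subst. f_equal; apply proof_irrelevance.
        - intros [d Hd]. destruct (Hs d) as [c Ec]. subst.
          exists (exist _ c Hd : substr HM'). unfold F; simpl. reflexivity.
        - intros f args. unfold F; simpl. apply eq_sig_hprop; [intros; apply proof_irrelevance|]. simpl.
          apply Hf.
        - intros r args. simpl. apply Hr. }
      rewrite <- (iso_sat HF phi v). rewrite Hel. simpl.
      apply (iso_sat Hh phi (fun n => proj1_sig (v n))).
Qed.

Lemma lascar_chain_ext K I m (x y x' y' : I -> C) :
  lascar_chain K m x y -> (forall i, x i = x' i) -> (forall i, y i = y' i) -> lascar_chain K m x' y'.
Proof.
  intros H E1 E2. replace x' with x by (apply functional_extensionality; auto).
  replace y' with y by (apply functional_extensionality; auto). auto.
Qed.

Lemma lascar_chain_automorphism K I m (x y : I -> C) g : automorphism C g ->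
  lascar_chain K m x y -> lascar_chain K m (fun i => g (x i)) (fun i => g (y i)).
Proof.
  intros Hg [a [Ms [E0 [Em Hk]]]].
  destruct (automorphism_has_inverse Hg) as [h [Hh [hg gh]]].
  exists (fun k i => g (a k i)), (fun k c => Ms k (h c)).
  split; [rewrite E0; auto|split; [rewrite Em; auto|]].
  intros k Hk'. destruct (Hk k Hk') as [sm eo]. split.
  - apply small_model_preimage; auto.
  - apply equiv_over_automorphism; auto.
Qed.

Lemma lascar_chain_app K I m1 m2 (x y z : I -> C) :
  lascar_chain K m1 x y -> lascar_chain K m2 y z -> lascar_chain K (m1 + m2) x z.
Proof.
  intros [a1 [M1 [A0 [Am H1]]]] [a2 [M2 [B0 [Bm H2]]]].
  exists (fun k => if k <=? m1 then a1 k else a2 (k - m1)),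
         (fun k => if k <? m1 then M1 k else M2 (k - m1)).
  split; [simpl; auto|split].
  - destruct (Nat.leb_spec (m1 + m2) m1).
    + assert (m2 = 0) by lia. subst. rewrite Nat.add_0_r. congruence.
    + replace (m1 + m2 - m1) with m2 by lia. auto.
  - intros k Hk. destruct (Nat.ltb_spec k m1).
    + rewrite (proj2 (Nat.leb_le k m1)) by lia. rewrite (proj2 (Nat.leb_le (S k) m1)) by lia. auto.
    + destruct (Nat.leb_spec k m1).
      * assert (k = m1) by lia. subst k.
        rewrite (proj2 (Nat.leb_gt (S m1) m1)) by lia. rewrite Am, <- B0.
        replace (S m1 - m1) with 1 by lia. replace (m1 - m1) with 0 by lia.
        apply H2; lia.
      * rewrite (proj2 (Nat.leb_gt (S k) m1)) by lia.
        replace (S k - m1) with (S (k - m1)) by lia. apply H2; lia.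
Qed.

Lemma lascar_chain_one K I (N : C -> Prop) (x y : I -> C) :
  small_model K N -> equiv_over N x y -> lascar_chain K 1 x y.
Proof.
  intros HN He. exists (fun k => if k =? 0 then x else y), (fun _ => N).
  split; [auto|split; [auto|]]. intros k Hk. assert (k = 0) by lia. subst. simpl. auto.
Qed.

Lemma lascar_chain_refl K I (x : I -> C) : lascar_chain K 0 x x.
Proof. exists (fun _ => x), (fun _ => fun _ => False). split; auto. split; auto. intros; lia. Qed.

Lemma homogeneous_over K (Hhom : strongly_homogeneous K C) (HKn : card_le nat K) I (HI : small K I)
  (N : C -> Prop) (HN : subset_small K N) (x y : I -> C) :
  equiv_over N x y -> exists g, automorphism C g /\ (forall c, N c -> g c = c) /\ (forall i, g (x i) = y i).
Proof.
  intros He.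
  set (J := ({c | N c} + I)%type).
  set (xx := fun j : J => match j with inl c => proj1_sig c | inr i => x i end).
  set (yy := fun j : J => match j with inl c => proj1_sig c | inr i => y i end).
  assert (sJ : small K J) by (apply small_sum; auto).
  assert (Heq : equiv_over (fun _ => False) xx yy).
  { intros [phi s] Hov.
    set (s1 := fun n => match s n with inl (inl c) => inr (proj1_sig c) | inl (inr i) => inl i | inr c => inr c end).
    assert (Hov1 : over N (phi, s1)).
    { intros n c Hn Hs. unfold s1 in Hs; simpl in Hs. destruct (s n) as [[c'|i]|c'] eqn:E.
      - injection Hs; intro; subst. exact (proj2_sig c').
      - discriminate.
      - exfalso. exact (Hov n c' Hn E). }
    assert (E1 : psat xx (phi, s) <-> psat x (phi, s1)).
    { unfold psat; simpl. apply sat_ext. intros n _. unfold valuation, s1. destruct (s n) as [[c|i]|c]; auto. }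
    assert (E2 : psat yy (phi, s) <-> psat y (phi, s1)).
    { unfold psat; simpl. apply sat_ext. intros n _. unfold valuation, s1. destruct (s n) as [[c|i]|c]; auto. }
    rewrite E1, E2. apply He; auto. }
  destruct (Hhom J sJ xx yy Heq) as [g [Hg Hgj]].
  exists g. split; auto. split.
  - intros c Nc. exact (Hgj (inl (exist _ c Nc))).
  - intro i. exact (Hgj (inr i)).
Qed.

End Automorphisms.

Section LascarDistance.
Variables (L : language) (K : Type) (C : structure L) (I : Type).

Lemma lascar_chain_one_sym (x y : I -> C) : lascar_chain K 1 x y -> lascar_chain K 1 y x.
Proof.
  intros [a [Ms [<- [<- Ha]]]]. destruct (Ha 0) as [HM Heq]; [lia|].
  apply lascar_chain_one with (Ms 0); auto using equiv_over_sym.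
Qed.

Lemma dL_le_refl (x : I -> C) : dL_le K x x 0.
Proof. exists 0; split; auto using lascar_chain_refl. Qed.

Lemma dL_le_step (alpha y : I -> C) (g : C -> C) n :
  automorphism C g -> lascar_chain K 1 alpha (fun i => g (alpha i)) ->
  dL_le K alpha y n -> dL_le K alpha (fun i => g (y i)) (S n).
Proof.
  intros Hg Hone [m [Hmn Hc]]. exists (1 + m); split; [lia|].
  exact (lascar_chain_app Hone (lascar_chain_automorphism Hg Hc)).
Qed.

Lemma dL_le_EL (Hhom : strongly_homogeneous K C) (HK : card_le nat K) (HI : small K I)
  (alpha beta : I -> C) n : dL_le K alpha beta n -> EL K alpha beta.
Proof.
  intros [m [_ [a [Ms [Ea0 [Eam Hk]]]]]].
  assert (Hind : forall k, k <= m -> exists g, autfL K g /\ forall i, g (alpha i) = a k i).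
  { induction k as [|k IH]; intro Hkm.
    - exists (fun x => x). split; [apply autfL_id|]. now rewrite Ea0.
    - destruct IH as [g [Hg Hga]]; [lia|].
      destruct (Hk k) as [[sMk elMk] eqk]; [lia|].
      destruct (homogeneous_over Hhom HK HI sMk eqk) as [gk [Hgk [Hgkfix Hgka]]].
      exists (fun x => gk (g x)). split.
      + apply autfL_comp; auto. apply autfL_gen. split; auto. exists (Ms k); split; [split|]; auto.
      + intro i. now rewrite Hga. }
  destruct (Hind m (le_n m)) as [g [Hg Hga]].
  exists g; split; auto. intro i; now rewrite Hga, Eam.
Qed.

End LascarDistance.

Section CompleteTypes.
Variables (L : language) (C : structure L) (I : Type) (q : pformula I C -> Prop).

Lemma realizes_restrict_equiv_over (Hq : complete_type (fun _ => True) q) (A : C -> Prop) (a b : I -> C) :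
  realizes a (restrict q A) -> realizes b (restrict q A) -> equiv_over A a b.
Proof.
  intros Ha Hb [phi s] Hov. destruct Hq as [_ [_ Hcq]].
  destruct (Hcq phi s (fun _ _ _ _ => Logic.I)) as [H|H].
  - split; intros _; [apply Hb|apply Ha]; split; auto.
  - pose proof (Ha _ (conj H Hov)) as Ha'. pose proof (Hb _ (conj H Hov)) as Hb'.
    unfold psat in *; simpl in *. tauto.
Qed.

Lemma realizes_restrict_mono (A A' : C -> Prop) (b : I -> C) :
  (forall c, A' c -> A c) -> realizes b (restrict q A) -> realizes b (restrict q A').
Proof.
  intros HA Hb x [qx ox]. apply Hb. split; auto. intros n c Hn Hs. exact (HA _ (ox n c Hn Hs)).
Qed.

End CompleteTypes.

Section AsetLascar.
Variables (L : language) (K : Type) (C : structure L) (I : Type).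
Hypotheses (HK : card_le nat K) (Hsat : kappa_saturated K C) (Hhom : strongly_homogeneous K C)
  (HI : small K I).
Variables (q : pformula I C -> Prop) (M : C -> Prop) (alpha : I -> C).
Hypotheses (Hq : complete_type (fun _ => True) q) (HM : small_model K M)
  (Halpha : realizes alpha (restrict q M)).

Lemma Aset_lascar_chain_one (t : C -> C) :
  Aset q alpha t -> lascar_chain K 1 alpha (fun i => t (alpha i)).
Proof.
  intros [Ht Hta].
  set (A := fun c => M c \/ range alpha c).
  assert (sA : subset_small K A).
  { apply subset_small_union; auto; [apply HM|now apply subset_small_range]. }
  destruct (realize_type (Sigma := restrict q A)) with (K := K) (A := A) as [beta Hbeta]; auto.
  { intros l Hl. apply (proj1 (proj2 Hq)). intros x Hx; apply Hl; auto. }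
  { intros x [_ Hx]; auto. }
  assert (Hbeta_alpha : equiv_over (range alpha) beta (fun i => t (alpha i))).
  { apply (realizes_restrict_equiv_over Hq); auto.
    apply (realizes_restrict_mono (A := A)); auto. intros c Hc; now right. }
  destruct (homogeneous_over Hhom HK HI (subset_small_range (f := alpha) HI) Hbeta_alpha)
    as [f [Hf [Hfix Hfbeta]]].
  assert (Hchain : lascar_chain K 1 alpha beta).
  { apply lascar_chain_one with M; [exact HM|].
    apply (realizes_restrict_equiv_over Hq); auto.
    apply (realizes_restrict_mono (A := A)); auto. intros c Hc; now left. }
  apply (lascar_chain_ext (lascar_chain_automorphism Hf Hchain)); auto.
  intro i. apply Hfix. now exists i.
Qed.

Lemma Aset_inv_lascar_chain_one (t g : C -> C) : Aset q alpha t ->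
  (forall x, g (t x) = x) -> (forall x, t (g x) = x) ->
  lascar_chain K 1 alpha (fun i => g (alpha i)).
Proof.
  intros Ht gt tg.
  assert (Hg : automorphism C g) by (apply (automorphism_inverse (proj1 Ht)); auto).
  apply lascar_chain_one_sym.
  apply (lascar_chain_ext (lascar_chain_automorphism Hg (Aset_lascar_chain_one Ht))); auto.
Qed.

End AsetLascar.

Theorem lemma5p9 (L : language) (K : Type) (C : structure L)
  (HK : kappa_large L K)
  (Hsat : kappa_saturated K C) (Hhom : strongly_homogeneous K C)
  (I : Type) (HI : small K I)
  (p q : pformula I C -> Prop)
  (Hp : complete_type (fun _ => False) p)
  (Hq : complete_type (fun _ => True) q)
  (Hpq : forall x, p x -> q x)
  (M : C -> Prop) (HM : small_model K M)
  (alpha : I -> C) (Halpha : realizes alpha (restrict q M)) :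
  (forall b1 b2 b3 b4 g3 g4 : C -> C,
     Aset q alpha b1 -> Aset q alpha b2 -> Aset q alpha b3 -> Aset q alpha b4 ->
     (forall x, g3 (b3 x) = x) -> (forall x, b3 (g3 x) = x) ->
     (forall x, g4 (b4 x) = x) -> (forall x, b4 (g4 x) = x) ->
     dL_le K alpha (fun i => b1 (b2 (g3 (g4 (alpha i))))) 4)
  /\
  (forall beta : I -> C, dL_le K alpha beta 4 -> EL K alpha beta).
Proof.
  destruct HK as [HKn _].
  split; [|intros beta; apply (dL_le_EL Hhom HKn HI)].
  intros b1 b2 b3 b4 g3 g4 B1 B2 B3 B4 g3b3 b3g3 g4b4 b4g4.
  assert (Hg3 : automorphism C g3) by (apply (automorphism_inverse (proj1 B3)); auto).
  assert (Hg4 : automorphism C g4) by (apply (automorphism_inverse (proj1 B4)); auto).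
  apply (dL_le_step (g := b1) (y := fun i => b2 (g3 (g4 (alpha i))))); [apply B1|..].
  { exact (Aset_lascar_chain_one HKn Hsat Hhom HI Hq HM Halpha B1). }
  apply (dL_le_step (g := b2) (y := fun i => g3 (g4 (alpha i)))); [apply B2|..].
  { exact (Aset_lascar_chain_one HKn Hsat Hhom HI Hq HM Halpha B2). }
  apply (dL_le_step (g := g3) (y := fun i => g4 (alpha i))); [exact Hg3|..].
  { exact (Aset_inv_lascar_chain_one HKn Hsat Hhom HI Hq HM Halpha B3 g3b3 b3g3). }
  apply (dL_le_step (g := g4) (y := alpha)); [exact Hg4|..].
  { exact (Aset_inv_lascar_chain_one HKn Hsat Hhom HI Hq HM Halpha B4 g4b4 b4g4). }
  apply dL_le_refl.
Qed.
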